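(* Let $\mathcal F=(\{U_n\},\{V_n\})$ be a frame and $\mathbb{P}$, $\Omega$ as in the context. For $\omega\in\Omega$ define the sequence of finite sets $(L^\omega_k)_{k\ge1}$ by concatenating, for $i=1,2,3,\dots$ in order, $U_{\omega_i}$ copies of $I_1$ followed by $V_{\omega_i}$ copies of $I_{2^d}$. Then for $\mathbb{P}$-almost every $\omega$ and every $t\ge0$, $$\liminf_{n\to\infty}\frac1n\log\sum_{w\in\prod_{k=1}^nL^\omega_k}2^{-nt}\le -t\log2.$$
   Context: $d\ge1$; $I_1=\{(0,\dots,0)\}\subset\{0,1\}^d$ and $I_{2^d}=\{0,1\}^d$. A frame is a pair $\mathcal F=(\{U_n\}_{n\in\mathbb{N}},\{V_n\}_{n\in\mathbb{N}})$ of sequences of positive integers with $U_1\ge1$ and, for all $n\in\mathbb{N}$, $nU_n\le V_n$ and $(U_n+V_n)^3\le U_{n+1}$. $\Omega=\mathbb{N}^{\mathbb{N}}$ carries the Bernoulli measure $\mathbb{P}$ with $\mathbb{P}([\omega_1\dots\omega_n])=p_{\omega_1}\cdots p_{\omega_n}$, where $p_n=\frac{1}{Cn^2}$, $C=\sum_{n\ge1}n^{-2}$. *)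

From HB Require Import structures.
From mathcomp Require Import all_boot all_order all_algebra.
From mathcomp Require Import all_classical all_reals all_analysis.
Set Implicit Arguments. Unset Strict Implicit. Unset Printing Implicit Defensive.
Import Order.TTheory GRing.Theory Num.Theory.
Local Open Scope classical_set_scope.
Local Open Scope ring_scope.

(* Omega = N^N with N = {1,2,3,...}.  We encode a sequence
   (omega_1, omega_2, ...) of positive integers as  om : nat -> nat  with
   omega_(i+1) = (om i).+1  (a bijection). *)

(* cylinder [omega_1 ... omega_n] encoded by the list s of (omega_i - 1) *)
Definition cyl (s : seq nat) : set (nat -> nat) :=
  [set om | forall i, (i < size s)%N -> om i = nth 0%N s i].

Definition cylinders : set (set (nat -> nat)) := [set cyl s | s in setT].

Definition Omega := g_sigma_algebraType cylinders.

Definition Cconst (R : realType) : R :=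
  limn (fun m => \sum_(1 <= n < m) (n%:R ^-2 : R)).
Definition pw (R : realType) (n : nat) : R := (Cconst R * n%:R ^+ 2)^-1.

Definition bernoulli_cyl (R : realType) (P : probability Omega R) : Prop :=
  forall s : seq nat, P (cyl s) = (\prod_(k <- s) pw R k.+1)%:E.

Definition is_frame (U V : nat -> nat) : Prop :=
  (1 <= U 1)%N /\
  (forall n, (1 <= n)%N -> (0 < U n)%N /\ (0 < V n)%N) /\
  (forall n, (1 <= n)%N -> (n * U n <= V n)%N /\ ((U n + V n) ^ 3 <= U n.+1)%N).

Definition cube (d : nat) := {ffun 'I_d -> bool}.
Definition I1 (d : nat) : {set cube d} := [set [ffun=> false]].
Definition I2d (d : nat) : {set cube d} := [set: cube d].

(* blocks for i = 1..m: U_{omega_i} copies of I_1 (false) followed by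
   V_{omega_i} copies of I_{2^d} (true) *)
Definition blocks (U V : nat -> nat) (om : nat -> nat) (m : nat) : seq bool :=
  flatten [seq nseq (U (om i).+1) false ++ nseq (V (om i).+1) true
          | i <- iota 0 m].

(* L^omega_k for k >= 1 (the first k blocks have length >= k in a frame) *)
Definition Lset (d : nat) (U V : nat -> nat) (om : nat -> nat) (k : nat)
  : {set cube d} :=
  if nth false (blocks U V om k) k.-1 then I2d d else I1 d.

(* prod_{k=1}^n L^omega_k, as functions 'I_n -> {0,1}^d, coordinate j <-> k = j+1 *)
Definition prodL (d : nat) (U V : nat -> nat) (om : nat -> nat) (n : nat)
  : {set {ffun 'I_n -> cube d}} :=
  [set w : {ffun 'I_n -> cube d} | [forall j : 'I_n, w j \in Lset d U V om j.+1]].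

From HB Require Import structures.
From mathcomp Require Import all_boot all_order all_algebra.
From mathcomp Require Import all_classical all_reals all_analysis.
From mathcomp Require Import zify ring lra.
Set Implicit Arguments. Unset Strict Implicit. Unset Printing Implicit Defensive.
Import Order.TTheory GRing.Theory Num.Theory numFieldNormedType.Exports.
Local Open Scope classical_set_scope.
Local Open Scope ring_scope.

(* Every L^om_k is I_1 or I_(2^d), so the sum is 2^(d N_n - n t), where N_n
   counts the k <= n with L^om_k = I_(2^d); it suffices that N_n / n has
   liminf 0.  A digit is < c with probability at most 1 - 1/(4(c+1)), so for
   c_i = h + log2 i + 2 each late dyadic block of indices halves the probability
   that all digits stay below c_i: almost surely, for every h, some digit
   reaches its threshold.  If i is the first such index and c = c_i, the first
   i blocks have total length S <= i (U_c + V_c), while block i opens with a run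
   of U_(om_i) >= (U_c + V_c)^3 copies of I_1; at the end of that run N_n <= S,
   whence i N_n <= n.  Taking h large forces i to be large. *)

Section Blocks.
Variables (U V : nat -> nat) (om : nat -> nat).

Lemma blocksS m : blocks U V om m.+1 =
  blocks U V om m ++ (nseq (U (om m).+1) false ++ nseq (V (om m).+1) true).
Proof. by rewrite /blocks -addn1 iotaD map_cat flatten_cat /= cats0 add0n. Qed.

Lemma size_blocksS m : size (blocks U V om m.+1) =
  (size (blocks U V om m) + (U (om m).+1 + V (om m).+1))%N.
Proof. by rewrite blocksS !size_cat !size_nseq. Qed.

Lemma blocks_prefix k k' : (k <= k')%N ->
  exists s, blocks U V om k' = blocks U V om k ++ s.
Proof.
elim: k' => [|k' IH]; first by rewrite leqn0 => /eqP->; exists [::]; rewrite cats0.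
rewrite leq_eqVlt => /orP[/eqP->|]; first by exists [::]; rewrite cats0.
by rewrite ltnS => /IH[s e]; rewrite blocksS e -catA; eexists.
Qed.

Lemma size_blocks_leq i s :
  (forall j, (j < i)%N -> (U (om j).+1 + V (om j).+1 <= s)%N) ->
  (size (blocks U V om i) <= i * s)%N.
Proof.
elim: i => [//|i IH] le_s; rewrite size_blocksS mulSn addnC leq_add //.
  exact: le_s.
by apply: IH => j ji; apply: le_s; rewrite ltnS ltnW.
Qed.

(* [full_bit j] holds iff [L^om_(j+1) = I_(2^d)]. *)
Definition full_bit j := nth false (blocks U V om j.+1) j.
Definition full_count n := (\sum_(j < n) full_bit j)%N.

Lemma card_prodL d n : #|prodL d U V om n| = (2 ^ (d * full_count n))%N.
Proof.
have -> : #|prodL d U V om n| =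
    #|(family (fun j : 'I_n => mem (Lset d U V om j.+1)) : simpl_pred _)|.
  by apply: eq_card => w; rewrite /prodL inE.
rewrite card_family foldrE big_map big_enum /= /full_count.
elim: n => [|n IH]; first by rewrite !big_ord0 muln0.
rewrite !big_ord_recr /= IH mulnDr expnD; congr (_ * _)%N.
rewrite /Lset -/(full_bit n); case: (full_bit n) => /=.
  by rewrite muln1 /I2d cardsT card_ffun card_bool card_ord.
by rewrite muln0 /I1 cards1.
Qed.

Hypothesis U_gt0 : forall n, (0 < U n.+1)%N.

Lemma leq_size_blocks k : (k <= size (blocks U V om k))%N.
Proof. by elim: k => // k IH; rewrite size_blocksS; have := U_gt0 (om k); lia. Qed.

Lemma full_bit_nth m j : (j < size (blocks U V om m))%N ->
  full_bit j = nth false (blocks U V om m) j.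
Proof.
move=> jm; rewrite /full_bit; case: (leqP j.+1 m) => jm'.
  have [s ->] := blocks_prefix jm'; rewrite nth_cat.
  by have := leq_size_blocks j.+1; case: ltnP.
by have [s ->] := blocks_prefix (ltnW jm'); rewrite nth_cat jm.
Qed.

(* The [U]-run of block [i] contributes nothing to the count. *)
Lemma full_count_run_end i :
  (full_count (size (blocks U V om i) + U (om i).+1) <= size (blocks U V om i))%N.
Proof.
set S := size _; rewrite /full_count.
rewrite -(big_mkord xpredT (fun j => nat_of_bool (full_bit j))).
rewrite (big_cat_nat _ (leq_addr _ S)) //= [X in (_ + X)%N]big1_seq ?addn0.
  have := @leq_sum _ (index_iota 0 S) xpredT (fun j => nat_of_bool (full_bit j))
    (fun _ => 1%N) (fun j _ => leq_b1 _).
  by rewrite sum_nat_const_nat subn0 muln1.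
move=> j /andP[_]; rewrite mem_index_iota => /andP[Sj jn].
rewrite (@full_bit_nth i.+1) ?size_blocksS; last by lia.
rewrite blocksS nth_cat -/S ltnNge Sj /= nth_cat size_nseq.
have -> : (j - S < U (om i).+1)%N by lia.
by rewrite nth_nseq; case: ifP.
Qed.

End Blocks.

Section Frame.
Variables (U V : nat -> nat).
Hypothesis frameUV : is_frame U V.

Lemma frame_U_gt0 n : (0 < U n.+1)%N.
Proof. by case: frameUV => _ [/(_ n.+1 (ltn0Sn n))[]]. Qed.

Lemma frame_UV_cube n : (1 <= n)%N -> ((U n + V n) ^ 3 <= U n.+1)%N.
Proof. by move=> n1; case: frameUV => _ [_ /(_ n n1)[]]. Qed.

Lemma frame_UV_le_U n : (1 <= n)%N -> (U n + V n <= U n.+1)%N.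
Proof.
move=> n1; apply: leq_trans (frame_UV_cube n1).
have : (0 < U n)%N by case: n n1 => // n _; exact: frame_U_gt0.
by rewrite -{1}(expn1 (U n + V n)) => U0; rewrite leq_pexp2l //; lia.
Qed.

Lemma frame_U_nondecr a b : (1 <= a)%N -> (a <= b)%N -> (U a <= U b)%N.
Proof.
move=> a1; elim: b => [|b IH]; first by lia.
rewrite leq_eqVlt => /orP[/eqP->//|]; rewrite ltnS => ab.
by have := frame_UV_le_U (leq_trans a1 ab); have := IH ab; lia.
Qed.

Lemma frame_UV_nondecr a b : (1 <= a)%N -> (a <= b)%N ->
  (U a + V a <= U b + V b)%N.
Proof.
move=> a1; rewrite leq_eqVlt => /orP[/eqP->//|ab].
apply: leq_trans (frame_UV_le_U a1) _; apply: leq_trans (leq_addr _ _).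
exact: frame_U_nondecr.
Qed.

Lemma frame_exp2_le_U n : (2 ^ n <= U n.+1)%N.
Proof.
elim: n => [|n IH]; first by case: frameUV.
have := frame_UV_le_U (ltn0Sn n).
case: frameUV => _ [_ /(_ n.+1 (ltn0Sn n)) [nUV _]].
have : (U n.+1 <= V n.+1)%N by apply: leq_trans nUV; exact: leq_pmull.
rewrite expnS; lia.
Qed.

(* If [om i] is the first digit reaching [c], the prefix before block [i] is
   short compared with the [U]-run of block [i]. *)
Lemma full_count_sparse om i c : (1 <= c)%N ->
  (forall j, (j < i)%N -> (om j < c)%N) -> (c <= om i)%N -> (i <= U c)%N ->
  let n := (size (blocks U V om i) + U (om i).+1)%N in
  (i <= n)%N /\ (i * full_count U V om n <= n)%N.
Proof.
move=> c1 small_before large_i i_le_Uc n.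
rewrite {}/n; set S := size _; set s := (U c + V c)%N.
have iS : (i <= S)%N by exact: (@leq_size_blocks U V om frame_U_gt0 i).
have Ss : (S <= i * s)%N.
  by apply: size_blocks_leq => j /small_before ji; exact: frame_UV_nondecr.
have s3 : (s ^ 3 <= U (om i).+1)%N.
  by apply: leq_trans (frame_UV_cube c1) _; exact: frame_U_nondecr.
have is_ : (i <= s)%N by apply: leq_trans i_le_Uc (leq_addr _ _).
split; first by lia.
apply: leq_trans (leq_mul (leqnn i) (@full_count_run_end U V om frame_U_gt0 i)) _.
apply: leq_trans (leq_addl S _); apply: leq_trans s3.
apply: leq_trans (leq_mul (leqnn i) Ss) _.
rewrite !expnS expn0 muln1; nia.
Qed.

End Frame.

(* Small enough that almost surely some digit reaches it
   ([threshold_prod_small]), large enough that [i <= U (threshold h i)]. *)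
Definition threshold (h i : nat) := (h + trunc_log 2 i + 2)%N.

Lemma threshold_nondecr h : {homo threshold h : i j / (i <= j)%N}.
Proof. by move=> i j ij; rewrite /threshold leq_add2r leq_add2l leq_trunc_log. Qed.

Lemma frame_le_U_threshold U V h i : is_frame U V -> (i <= U (threshold h i))%N.
Proof.
move=> frameUV; have := frame_exp2_le_U frameUV (h + trunc_log 2 i + 1).
have := @trunc_log_ltn 2 i isT.
have -> : threshold h i = (h + trunc_log 2 i + 1).+1 by rewrite /threshold; lia.
move=> i_lt U_ge; apply: leq_trans U_ge; apply: ltnW; apply: leq_trans i_lt _.
by rewrite leq_exp2l //; lia.
Qed.

Lemma frequently_sparse_full U V om : is_frame U V ->
  (forall h, exists i, (threshold h i <= om i)%N) ->
  forall a, exists2 n, (a <= n)%N & (a * full_count U V om n <= n)%N.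
Proof.
move=> frameUV large a.
pose h := (a + \max_(j < a) om j)%N.
have ex : exists i, (threshold h i <= om i)%N by exact: large.
have [i i_large i_min] := ex_minnP ex.
have small_before j : (j < i)%N -> (om j < threshold h i)%N.
  move=> ji; rewrite ltnNge; apply/negP => hj.
  have := i_min j (leq_trans (threshold_nondecr h (ltnW ji)) hj); lia.
have ai : (a <= i)%N.
  rewrite leqNgt; apply/negP => ia.
  have : (om i <= \max_(j < a) om j)%N.
    exact: (@leq_bigmax _ (fun j : 'I_a => om j) (Ordinal ia)).
  by move: i_large; rewrite /threshold /h; lia.
have [i_le_n sparse] := full_count_sparse frameUV (ltn_addl _ (ltn0Sn 1))
  small_before i_large (frame_le_U_threshold h i frameUV).
eexists; first exact: leq_trans ai i_le_n.
by apply: leq_trans sparse; rewrite leq_mul2r ai orbT.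
Qed.

Lemma limn_einf_le_frequently (R : realType) (u : nat -> \bar R) (a : R) :
  (forall e : R, 0 < e -> forall M, exists2 n, (M <= n)%N & (u n <= (a + e)%:E)%E) ->
  (limn_einf u <= a%:E)%E.
Proof.
move=> freq; rewrite limn_einf_lim (cvg_lim _ (@cvg_einfs_sup R u)) //=.
apply: ge_ereal_sup => _ [M _ <-]; apply/lee_addgt0Pr => e e0.
have [n Mn un] := freq e e0 M.
by rewrite -EFinD; apply: le_trans un; apply: ereal_inf_lbound; exists n.
Qed.

Lemma ln_sum_prodL (R : realType) d U V om n (t : R) : (0 < n)%N ->
  (n%:R)^-1 * ln (\sum_(w in prodL d U V om n) (2 : R) `^ (- (n%:R * t))) =
  (d * full_count U V om n)%N%:R / n%:R * ln 2 - t * ln 2.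
Proof.
move=> n0; rewrite sumr_const card_prodL -[X in ln X]mulr_natr.
rewrite lnM ?posrE ?powR_gt0 ?ltr0n ?expn_gt0 //.
rewrite ln_powR natrX lnXn // -[X in _ + X]mulr_natr.
have : (n%:R : R) != 0 by rewrite pnatr_eq0 -lt0n.
by move=> n_neq0; field.
Qed.

Lemma liminf_ln_sum_prodL_le (R : realType) d U V om (t : R) : is_frame U V ->
  (forall h, exists i, (threshold h i <= om i)%N) ->
  (limn_einf (fun n : nat =>
     ((n%:R)^-1 * ln (\sum_(w in prodL d U V om n) (2 : R) `^ (- (n%:R * t))))%:E)
   <= (- t * ln 2)%:E)%E.
Proof.
move=> frameUV large; apply: limn_einf_le_frequently => e e0 M.
pose a := (M + Num.truncn (d%:R * ln 2 / e)).+1.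
have [n an sparse] := frequently_sparse_full frameUV large a.
have n0 : (0 < n)%N by apply: leq_trans an.
exists n; first by apply: leq_trans an; rewrite /a; lia.
rewrite lee_fin ln_sum_prodL // mulNr addrC lerD2l.
have ln2_gt0 : 0 < ln (2 : R) by apply: ln_gt0; rewrite ltr1n.
have a0 : (0 : R) < a%:R by rewrite ltr0n.
have n0' : (0 : R) < n%:R by rewrite ltr0n.
have density : (d * full_count U V om n)%N%:R / n%:R <= d%:R / a%:R :> R.
  rewrite ler_pdivrMr // mulrAC ler_pdivlMr // -!natrM ler_nat.
  by rewrite mulnAC -mulnA leq_mul2l sparse orbT.
have a_large : d%:R * ln 2 / e < a%:R.
  by apply: lt_le_trans (truncnS_gt _) _; rewrite ler_nat /a ltnS leq_addl.
apply: le_trans (ler_wpM2r (ltW ln2_gt0) density) _.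
rewrite ltr_pdivrMr // in a_large.
by rewrite mulrAC ler_pdivrMr // [e * _]mulrC; exact: ltW.
Qed.

Section SumInvSq.
Variable R : realType.

Lemma inv_subS_eq (y : R) : 0 < y -> y^-1 - (y + 1)^-1 = (y * (y + 1))^-1.
Proof. by move=> y0; field; apply/andP; split; rewrite gt_eqF //; lra. Qed.

Lemma invsqS_le_inv_subS (y : R) : 0 < y -> ((y + 1) ^+ 2)^-1 <= y^-1 - (y + 1)^-1.
Proof.
by move=> y0; rewrite inv_subS_eq // lef_pV2 ?posrE ?mulr_gt0 ?exprn_gt0 //; nra.
Qed.

Lemma inv_subS_le_invsq (y : R) : 0 < y -> y^-1 - (y + 1)^-1 <= (y ^+ 2)^-1.
Proof.
by move=> y0; rewrite inv_subS_eq // lef_pV2 ?posrE ?mulr_gt0 ?exprn_gt0 //; nra.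
Qed.

Definition sum_invsq (m : nat) : R := \sum_(1 <= n < m) (n%:R ^-2 : R).

Lemma sum_invsqS m : (1 <= m)%N -> sum_invsq m.+1 = sum_invsq m + m%:R ^-2.
Proof. by move=> m1; rewrite /sum_invsq big_nat_recr. Qed.

Lemma sum_invsq_nondecr : {homo sum_invsq : n m / (n <= m)%N >-> n <= m}.
Proof.
apply/nondecreasing_seqP => -[|m]; first by rewrite /sum_invsq !big_geq.
by rewrite [sum_invsq m.+2]sum_invsqS // lerDl invr_ge0 exprn_ge0.
Qed.

Lemma sum_invsq_le2 m : sum_invsq m <= 2.
Proof.
have bound k : sum_invsq k.+2 + k.+1%:R^-1 <= 2.
  elim: k => [|k IH]; first by rewrite /sum_invsq big_nat1 expr1n invr1; lra.
  rewrite sum_invsqS //; apply: le_trans IH.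
  have -> : (k.+2%:R : R) = k.+1%:R + 1 by rewrite -natr1.
  by rewrite -addrA lerD2l -lerBrDr invsqS_le_inv_subS.
case: m => [|[|k]]; try by rewrite /sum_invsq big_geq.
by apply: le_trans (bound k); rewrite lerDl invr_ge0.
Qed.

Lemma is_cvgn_sum_invsq : cvgn (sum_invsq : R^nat).
Proof.
apply: nondecreasing_is_cvgn; first exact: sum_invsq_nondecr.
by exists 2 => _ [m _ <-]; exact: sum_invsq_le2.
Qed.

Lemma sum_invsq_le_Cconst m : sum_invsq m <= Cconst R.
Proof.
exact: (nondecreasing_cvgn_le sum_invsq_nondecr is_cvgn_sum_invsq).
Qed.

Lemma Cconst_le2 : Cconst R <= 2.
Proof.
apply: limr_le; first exact: is_cvgn_sum_invsq.
by near=> n; exact: sum_invsq_le2.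
Unshelve. all: by end_near.
Qed.

Lemma sum_invsq_tail k M : (1 <= k <= M)%N ->
  sum_invsq k + k%:R^-1 - M%:R^-1 <= sum_invsq M.
Proof.
case/andP=> k1; elim: M => [|M IH]; first by lia.
rewrite leq_eqVlt => /orP[/eqP <-|]; first by rewrite addrK.
rewrite ltnS => kM; have {}IH := IH kM.
rewrite sum_invsqS; last exact: leq_trans kM.
have := @inv_subS_le_invsq M%:R; rewrite ltr0n (leq_trans k1 kM) => /(_ isT).
by rewrite -natr1; lra.
Qed.

Lemma Cconst_gap k : (1 <= k)%N -> sum_invsq k + (2 * k%:R)^-1 <= Cconst R.
Proof.
move=> k1; apply: le_trans (sum_invsq_le_Cconst (2 * k)).
have k0 : (0 : R) < k%:R by rewrite ltr0n.
apply: le_trans (@sum_invsq_tail k (2 * k) _); last by rewrite k1; lia.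
rewrite natrM invfM; lra.
Qed.

Lemma Cconst_gt0 : 0 < Cconst R.
Proof.
by apply: lt_le_trans (Cconst_gap (leqnn 1)); rewrite /sum_invsq big_geq // add0r mulr1.
Qed.

Definition pbelow (c : nat) : R := \sum_(x < c) pw R x.+1.

Lemma pbelowE c : pbelow c = sum_invsq c.+1 / Cconst R.
Proof.
rewrite /sum_invsq big_add1 /= big_mkord mulr_suml; apply: eq_bigr => x _.
by rewrite /pw invfM mulrC.
Qed.

Lemma pbelow_bound c : 0 <= pbelow c <= 1 - (4 * c.+1%:R)^-1.
Proof.
rewrite pbelowE; have C0 := Cconst_gt0; have C2 := Cconst_le2.
have gap := Cconst_gap (ltn0Sn c).
have S0 : 0 <= sum_invsq c.+1 by apply: sumr_ge0 => n _; rewrite invr_ge0 exprn_ge0.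
rewrite divr_ge0 ?(ltW C0) //= ler_pdivrMr //.
have k0 : (0 : R) < c.+1%:R by rewrite ltr0n.
move: gap; rewrite !invfM; set z := c.+1%:R^-1.
have z0 : 0 < z by rewrite invr_gt0.
nra.
Qed.

End SumInvSq.

Lemma leq_mul8_exp2 k : (6 <= k)%N -> (8 * k <= 2 ^ k)%N.
Proof.
elim: k => [//|k IH]; rewrite leq_eqVlt => /orP[/eqP<-//|]; rewrite ltnS => k6.
by have := IH k6; rewrite expnS; lia.
Qed.

Section ThresholdProduct.
Variable R : realType.

Lemma bernoulli_onemX (x : R) n : 0 <= x <= 1 -> (1 - x) ^+ n * (1 + n%:R * x) <= 1.
Proof.
case/andP=> x0 x1; elim: n => [|n IH]; first by rewrite expr0 mul0r addr0 mul1r.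
apply: le_trans IH; rewrite exprSr -mulrA ler_wpM2l ?exprn_ge0 ?subr_ge0 //.
by rewrite -natr1; have : 0 <= (n%:R : R) by []; nra.
Qed.

Lemma pbelow_ge0 c : 0 <= pbelow R c.
Proof. by have /andP[] := pbelow_bound R c. Qed.

Lemma pbelow_le1 c : pbelow R c <= 1.
Proof.
have /andP[_ le_onem] := pbelow_bound R c; apply: le_trans le_onem _.
by rewrite lerBlDr lerDl invr_ge0 mulr_ge0.
Qed.

(* On [2^k <= i < 2^(k+1)] the threshold is constant, and [2^k] factors
   [1 - x] with [2^k x >= 1] multiply to at most [1/2]. *)
Lemma dyadic_threshold_prod_le_half h k : (h + 6 <= k)%N ->
  2 * \prod_(2 ^ k <= i < 2 ^ k.+1) pbelow R (threshold h i) <= 1.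
Proof.
move=> hk; set x : R := (4 * (h + k + 2).+1%:R)^-1.
have block_const i : (2 ^ k <= i < 2 ^ k.+1)%N -> threshold h i = (h + k + 2)%N.
  by move=> ik; rewrite /threshold (trunc_log_eq _ ik).
have prod_le : \prod_(2 ^ k <= i < 2 ^ k.+1) pbelow R (threshold h i)
    <= (1 - x) ^+ (2 ^ k.+1 - 2 ^ k).
  rewrite -prodr_const_nat big_seq_cond [leRHS]big_seq_cond.
  apply: ler_prod => i /andP[+ _]; rewrite mem_index_iota => /block_const->.
  by rewrite pbelow_ge0; have /andP[] := pbelow_bound R (h + k + 2).
rewrite (_ : 2 ^ k.+1 - 2 ^ k = 2 ^ k)%N in prod_le; last by rewrite expnS; lia.
have x0 : 0 < x by rewrite invr_gt0 mulr_gt0 // ltr0n.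
have x1 : x <= 1 by rewrite invr_le1 ?unitfE ?mulf_neq0 ?pnatr_eq0 // -natrM ler1n.
have mx : 1 <= (2 ^ k)%:R * x.
  rewrite ler_pdivlMr ?mulr_gt0 ?ltr0n // mul1r -natrM ler_nat.
  by have := @leq_mul8_exp2 k; lia.
have := @bernoulli_onemX x (2 ^ k); rewrite x1 ltW // => /(_ isT) bern.
apply: le_trans (ler_wpM2l _ prod_le) _ => //.
by apply: le_trans bern; rewrite mulrC ler_wpM2l ?exprn_ge0 ?subr_ge0 //; lra.
Qed.

Lemma threshold_prod_small h (e : R) : 0 < e ->
  exists b, \prod_(0 <= i < b) pbelow R (threshold h i) <= e.
Proof.
move=> e0; pose Q b := \prod_(0 <= i < b) pbelow R (threshold h i).
have Q_ge0 b : 0 <= Q b by apply: prodr_ge0 => i _; exact: pbelow_ge0.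
have halving (j : nat) : Q (2 ^ (h + 6 + j))%N * (2 ^ j)%:R <= 1.
  elim: j => [|j IH]; first by rewrite addn0 mulr1 prodr_ile1 // => i _;
    rewrite pbelow_ge0 pbelow_le1.
  rewrite /Q addnS (big_cat_nat (n := (2 ^ (h + 6 + j))%N)) //=; last first.
    by rewrite leq_exp2l // ltnW.
  rewrite -/(Q _) [(2 ^ j.+1)%N]expnS natrM.
  have := dyadic_threshold_prod_le_half (leq_addr j (h + 6)).
  set B := \prod_(_ <= i < _) _ => B_half.
  have B0 : 0 <= B by apply: prodr_ge0 => i _; exact: pbelow_ge0.
  rewrite (_ : _ * _ * _ = Q (2 ^ (h + 6 + j))%N * (2 ^ j)%:R * (2 * B)); last by ring.
  by rewrite -[leRHS]mul1r ler_pM ?mulr_ge0 ?pmulr_rge0.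
exists (2 ^ (h + 6 + Num.truncn e^-1))%N.
have w0 : (0 : R) < (2 ^ Num.truncn e^-1)%:R by rewrite ltr0n expn_gt0.
rewrite -(ler_pM2r w0); apply: le_trans (halving _) _.
rewrite -ler_pdivrMl // mulr1; apply/ltW/(lt_le_trans (truncnS_gt _)).
by rewrite ler_nat ltn_expl.
Qed.

End ThresholdProduct.

Fixpoint bounded_words (c : nat -> nat) (b : nat) : seq (seq nat) :=
  if b is b'.+1 then [seq rcons s x | s <- bounded_words c b', x <- iota 0 (c b')]
  else [:: [::]].

Lemma prefix_mem_bounded_words c b (om : nat -> nat) :
  (forall i, (i < b)%N -> (om i < c i)%N) -> map om (iota 0 b) \in bounded_words c b.
Proof.
elim: b => [|b IH] small; first by rewrite inE.
rewrite -addn1 iotaD map_cat cats1 add0n addn1 /=.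
apply: (@allpairs_f _ _ _ (fun s x => rcons s x)).
  by apply: IH => i ib; apply: small; rewrite ltnS ltnW.
by rewrite mem_iota add0n small.
Qed.

Lemma sum_prod_bounded_words (R : realType) c b :
  \sum_(s <- bounded_words c b) \prod_(k <- s) pw R k.+1 =
  \prod_(0 <= i < b) pbelow R (c i).
Proof.
elim: b => [|b IH]; first by rewrite big_seq1 big_nil big_geq.
rewrite /= big_allpairs_dep /= big_nat_recr //= -IH mulr_suml.
apply: eq_bigr => s _; rewrite /pbelow -(big_mkord xpredT (fun x => pw R x.+1)).
by rewrite mulr_sumr /index_iota subn0; apply: eq_bigr => x _; rewrite big_rcons.
Qed.

Lemma cyl_prefix (om : nat -> nat) b : cyl (map om (iota 0 b)) om.
Proof.
move=> i; rewrite size_map size_iota => ib.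
by rewrite (nth_map 0%N) ?size_iota // nth_iota.
Qed.

Lemma measurable_cyl s : measurable (cyl s : set Omega).
Proof. by apply: sub_gen_smallest; exists s. Qed.

Definition cyl_union (L : seq (seq nat)) : set Omega :=
  \big[setU/set0]_(k < size L) cyl (nth [::] L k).

Lemma measurable_cyl_union L : measurable (cyl_union L).
Proof. by apply: bigsetU_measurable => k _; exact: measurable_cyl. Qed.

Lemma cyl_union_mem L s (om : Omega) : s \in L -> cyl s om -> cyl_union L om.
Proof.
move=> sL om_s.
have -> : cyl_union L = \bigcup_(k < size L) cyl (nth [::] L k).
  by rewrite bigcup_mkord.
by exists (index s L); rewrite /= ?index_mem ?nth_index.
Qed.

Lemma cyl_union_le (R : realType) (P : probability Omega R) L : bernoulli_cyl P ->
  (P (cyl_union L) <= (\sum_(s <- L) \prod_(k <- s) pw R k.+1)%:E)%E.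
Proof.
move=> BP; have subadd := @content_subadditive _ R Omega P (cyl_union L)
  (fun k => cyl (nth [::] L k)) (size L).
apply: le_trans (subadd _ (measurable_cyl_union L) _) _ => //.
  by move=> k _; exact: measurable_cyl.
rewrite (big_nth [::]) big_mkord -sumEFin lee_sum // => k _.
by rewrite -BP.
Qed.

Lemma bounded_digits_negligible (R : realType) (P : probability Omega R) c :
  bernoulli_cyl P ->
  (forall e : R, 0 < e -> exists b, \prod_(0 <= i < b) pbelow R (c i) <= e) ->
  P.-negligible [set om : Omega | forall i, (om i < c i)%N].
Proof.
move=> BP small_prod; pose M := \bigcap_b cyl_union (bounded_words c b).
have Mm : measurable M.
  by apply: bigcapT_measurable => b; exact: measurable_cyl_union.
exists M; split => //.
- apply/eqP; rewrite -measure_le0; apply/lee_addgt0Pr => e e0.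
  have [b Pb] := small_prod e e0.
  rewrite add0e; apply: (@le_trans _ _ (P (cyl_union (bounded_words c b)))).
    apply: le_measure; rewrite ?inE //; first exact: measurable_cyl_union.
    by move=> x Mx; exact: Mx.
  by apply: le_trans (cyl_union_le (bounded_words c b) BP) _; rewrite sum_prod_bounded_words lee_fin.
- move=> om small b _; apply: (@cyl_union_mem _ (map om (iota 0 b))).
    by apply: prefix_mem_bounded_words => i _; exact: small.
  exact: cyl_prefix.
Qed.

Theorem mainTheorem3 (R : realType) (d : nat) (U V : nat -> nat)
  (P : probability Omega R) :
  (1 <= d)%N -> is_frame U V -> bernoulli_cyl P ->
  {ae P, forall om : Omega, forall t : R, 0 <= t ->
     (limn_einf (fun n : nat =>
        ((n%:R)^-1 * ln (\sum_(w in prodL d U V om n) (2 : R) `^ (- (n%:R * t))))%:E)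
      <= (- t * ln 2)%:E)%E}.
Proof.
move=> _ frameUV BP.
have null : P.-negligible
    (\bigcup_h [set om : Omega | forall i, (om i < threshold h i)%N]).
  apply: negligible_bigcup => h; apply: bounded_digits_negligible => // e.
  exact: threshold_prod_small.
apply: negligibleS null => om /= fails.
have [[h small]|no_h] := pselect (exists h, forall i, (om i < threshold h i)%N).
  by exists h.
exfalso; apply: fails => t _; apply: liminf_ln_sum_prodL_le frameUV _ => h.
apply/not_existsP => small; apply: no_h; exists h => i.
by rewrite ltnNge; apply/negP; exact: small.
Qed.
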